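(* Let $G$ be a finite connected graph containing two distinct cycles, and suppose $\mathrm{cat}(G)=3$. Then $|V(G)|=6$ and $G$ consists of two vertex-disjoint triangles together with a single edge joining a vertex of one triangle to a vertex of the other.
   Context: Cat Herding is played on a simple graph $G$. The cat first places its token on a vertex. Then the players alternate, the herder moving first: the herder deletes one edge of the current graph, and then, unless the cat's current vertex has degree $0$ in the current graph, the cat moves its token along a path with at least one edge in the current graph to a different vertex. The cat is captured when its vertex has degree $0$ in the current graph, and the game ends; the score is the number of edges deleted. For a finite graph $G$ and $v\in V(G)$, $\mathrm{cat}(G,v)$ is the score under optimal play (herder minimizing, cat maximizing) when the cat starts at $v$, and $\mathrm{cat}(G)=\max_{v}\mathrm{cat}(G,v)$. *)

From mathcomp Require Import all_boot.
Set Implicit Arguments. Unset Strict Implicit. Unset Printing Implicit Defensive.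

Section CatHerding.
Variable T : finType.

Definition simple_graph (adj : rel T) : Prop :=
  symmetric adj /\ irreflexive adj.

Definition edges (adj : rel T) : {set {set T}} :=
  [set E : {set T} | [exists x, exists y, adj x y && (E == [set x; y])]].

(* The current graph is given by its remaining edge set E (2-sets). *)
Definition deg (E : {set {set T}}) (v : T) : nat := #|[set f in E | v \in f]|.

Definition eadj (E : {set {set T}}) : rel T := fun x y => [set x; y] \in E.

Definition cat_move (E : {set {set T}}) (v w : T) : bool :=
  connect (eadj E) v w && (w != v).

(* catval n E v: value of the game (herder minimizing, cat maximizing
   the number of edges deleted from now on) when the current edge set is E,
   the cat sits at v and it is the herder's turn; n is fuel (n >= #|E|). *)
Fixpoint catval (n : nat) (E : {set {set T}}) (v : T) : nat :=
  match n with
  | 0 => 0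
  | n'.+1 =>
    if deg E v == 0 then 0 else
    \big[minn/#|E|]_(f in E)
       (1 + (if deg (E :\ f) v == 0 then 0
             else \max_(w | cat_move (E :\ f) v w) catval n' (E :\ f) w))
  end.

Definition cat_at (adj : rel T) (v : T) : nat :=
  catval #|edges adj| (edges adj) v.

Definition cat_number (adj : rel T) : nat := \max_(v : T) cat_at adj v.

Definition connected_graph (adj : rel T) : Prop :=
  (0 < #|T|) /\ forall x y, connect adj x y.

(* A cycle: a duplicate-free cyclic vertex sequence of length >= 3 whose
   consecutive vertices are adjacent; identified with its edge set. *)
Definition cycle_edges (p : seq T) : {set {set T}} :=
  [set [set x; y] | x in p, y in p & y == next p x].

Definition is_cycle (adj : rel T) (p : seq T) : Prop :=
  [/\ 3 <= size p, uniq p & cycle adj p].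

Definition two_distinct_cycles (adj : rel T) : Prop :=
  exists p q, [/\ is_cycle adj p, is_cycle adj q & cycle_edges p != cycle_edges q].

End CatHerding.

From mathcomp Require Import all_boot.
Set Implicit Arguments. Unset Strict Implicit. Unset Printing Implicit Defensive.

(* A fork centred at [w] is a trail [a - b - w - c - d] whose two end edges
   differ; the cat standing on a fork scores at least 3. So if cat(G) = 3,
   then for every start [v] the herder has a first move [f] after which no
   vertex [w <> v] of the component of [v] in [G - f] is a fork centre. A cycle
   of length at least 4, and a triangle with an extra edge at one corner, both
   have fork centres at two different vertices; hence every cycle of [G - f]
   meeting that component is a triangle containing the whole component.
   Playing this against the vertices of two distinct cycles of [G] shows that
   each of them is a triangle left by a single edge, that the two triangles
   are disjoint and joined by that edge, and that there is nothing else. *)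

Section Basics.
Variable T : finType.
Implicit Types x y z t : T.

Lemma set2_eq x y z t : [set x; y] = [set z; t] ->
  (x = z /\ y = t) \/ (x = t /\ y = z).
Proof.
move=> E.
have /set2P hx : x \in [set z; t] by rewrite -E set21.
have /set2P hy : y \in [set z; t] by rewrite -E set22.
have /set2P hz : z \in [set x; y] by rewrite E set21.
have /set2P ht : t \in [set x; y] by rewrite E set22.
by case: hx hy hz ht => e1 [] e2 [] e3 [] e4; subst; auto.
Qed.

Lemma set2_neq x y z t : x != z -> x != t -> [set x; y] != [set z; t].
Proof.
move=> nxz nxt; apply/eqP => E.
by have := set21 x y; rewrite E !inE (negbTE nxz) (negbTE nxt).
Qed.

Lemma connect_exit (e : rel T) (A : pred T) x y :
  connect e x y -> A x -> ~~ A y -> exists a b, [/\ A a, ~~ A b & e a b].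
Proof.
case/connectP => s; elim: s x => [|z s IH] x /=; first by move=> _ -> ->.
case/andP => exz ps ly Ax nAy.
by case: (boolP (A z)) => [Az|nAz]; [apply: IH ps ly Az nAy | exists x, z].
Qed.

End Basics.

Section Game.
Variable T : finType.
Implicit Types (X : {set {set T}}) (u v w x y : T).

Local Notation value X v := (catval #|X| X v) (X in scope set_scope).

Lemma eadj_sym X : symmetric (eadj X).
Proof. by move=> x y; rewrite /eadj setUC. Qed.

Lemma eadjD1 X g x y : eadj (X :\ g) x y = ([set x; y] != g) && eadj X x y.
Proof. by rewrite /eadj in_setD1. Qed.

Definition loopless X := forall x, [set x] \notin X.

Lemma loopless_neq X x y : loopless X -> eadj X x y -> x != y.
Proof. by move=> lX; apply: contraTneq => ->; rewrite /eadj setUid. Qed.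

Lemma looplessD1 X g : loopless X -> loopless (X :\ g).
Proof. by move=> lX x; rewrite in_setD1 negb_and lX orbT. Qed.

Lemma eadj_deg X v w : eadj X v w -> deg X v != 0.
Proof.
by move=> Evw; rewrite -lt0n; apply/card_gt0P; exists [set v; w]; rewrite !inE eqxx andbT.
Qed.

Lemma cat_move_deg X v w : cat_move X v w -> deg X v != 0.
Proof.
case/andP => /connectP [[|z s] /=]; first by move=> _ ->; rewrite eqxx.
by case/andP => Evz _ _ _; apply: eadj_deg Evz.
Qed.

Lemma cat_move1 X g v w : loopless X -> eadj X v w -> [set v; w] != g ->
  cat_move (X :\ g) v w.
Proof.
move=> lX Evw ng; rewrite /cat_move connect1 ?eadjD1 ?ng //=.
by rewrite eq_sym (loopless_neq lX Evw).
Qed.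

Lemma catval_le_card n X v : catval n X v <= #|X|.
Proof.
case: n => [|n] //=; case: ifP => // _.
by elim/big_rec: _ => // f m _; apply: leq_trans (geq_minr _ _).
Qed.

Lemma catval_gt0 X v w : eadj X v w -> 0 < value X v.
Proof.
move=> Evw; have dv := eadj_deg Evw.
have Xvw : [set v; w] \in X by [].
have := cardsD1 [set v; w] X; rewrite Xvw add1n => cardX.
rewrite [in catval _ _ _]cardX /= (negbTE dv).
by elim/big_rec: _ => [|f m _ m_gt0]; rewrite ?cardX // leq_min m_gt0.
Qed.

Lemma catval_gt k X v : deg X v != 0 ->
  (forall f, f \in X -> exists2 w, cat_move (X :\ f) v w & k <= value (X :\ f) w) ->
  k < value X v.
Proof.
move=> dv cat_wins.
have [f0 Xf0] : exists f, f \in X.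
  by move: dv; rewrite -lt0n => /card_gt0P [f]; rewrite inE => /andP [? _]; exists f.
have := cardsD1 f0 X; rewrite Xf0 add1n => cardX.
rewrite [in catval _ _ _]cardX /= (negbTE dv).
elim/big_rec: _ => [|f m Xf k_lt_m].
  have [w _ kw] := cat_wins f0 Xf0.
  by rewrite cardX ltnS (leq_trans kw (catval_le_card _ _ _)).
rewrite leq_min k_lt_m andbT.
have [w mvw kw] := cat_wins f Xf.
have cardXf : #|X :\ f0| = #|X :\ f|.
  by have := cardsD1 f X; rewrite Xf add1n cardX => -[].
rewrite (negbTE (cat_move_deg mvw)) add1n ltnS cardXf.
exact: leq_trans kw (leq_bigmax_cond w mvw).
Qed.

Lemma herder_strategy k X v : deg X v != 0 -> value X v <= k.+1 ->
  exists2 f, f \in X & forall w, cat_move (X :\ f) v w -> value (X :\ f) w <= k.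
Proof.
move=> dv le_k1.
have [/exists_inP [f Xf /forallP herder_wins] | cat_wins] :=
  boolP [exists f in X, [forall w, cat_move (X :\ f) v w ==> (value (X :\ f) w <= k)]].
  by exists f => // w; apply/implyP.
have : k.+1 < value X v; last by rewrite ltnNge le_k1.
apply: catval_gt => // f Xf.
move/exists_inPn: cat_wins => /(_ f Xf) /forallPn [w].
by rewrite negb_imply -ltnNge => /andP [mvw kw]; exists w.
Qed.

Lemma catval_gt1 X u t1 t2 : loopless X -> eadj X u t1 -> eadj X u t2 -> t1 != t2 ->
  1 < value X u.
Proof.
move=> lX Eu1 Eu2 n12; apply: catval_gt => [|h Xh]; first exact: eadj_deg Eu1.
have [t [Eut nh]] : exists t, eadj X u t /\ [set u; t] != h.
  case: (eqVneq [set u; t1] h) => [<-|]; last by exists t1.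
  exists t2; split => //; rewrite setUC [[set u; t1]]setUC.
  by apply: set2_neq; rewrite eq_sym ?n12 ?(loopless_neq lX Eu2).
exists t; first exact: cat_move1.
by apply: (@catval_gt0 _ _ u); rewrite eadjD1 setUC nh eadj_sym.
Qed.

Definition fork X w := exists a b c d,
  [/\ eadj X a b, eadj X b w, eadj X w c, eadj X c d &
      [/\ b != c, a != w, d != w & [set a; b] != [set c; d]]].

(* Whatever edge the herder deletes, one branch of the fork survives and
   the cat runs to its middle vertex, which still has two edges. *)
Lemma fork_catval X w : loopless X -> fork X w -> 2 < value X w.
Proof.
move=> lX [a [b [c [d [Eab Ebw Ewc Ecd [nbc naw ndw nabcd]]]]]].
have nwc := loopless_neq lX Ewc.
have nbw := loopless_neq lX Ebw.
have lXg g : loopless (X :\ g) by apply: looplessD1.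
apply: catval_gt => [|g Xg]; first exact: eadj_deg Ewc.
have [g_wc|] := boolP ((g != [set w; c]) && (g != [set c; d])).
  case/andP: g_wc => nwc_g ncd_g.
  exists c; first by apply: cat_move1; rewrite 1?eq_sym.
  apply: (@catval_gt1 _ _ w d) => //; last by rewrite eq_sym.
    by rewrite eadjD1 eadj_sym Ewc setUC eq_sym nwc_g.
  by rewrite eadjD1 Ecd eq_sym ncd_g.
rewrite negb_and !negbK => g_wc_cd.
have nbw_g : [set b; w] != g.
  by case/orP: g_wc_cd => /eqP ->; [apply: set2_neq | rewrite setUC; apply: set2_neq];
    rewrite // eq_sym.
have nab_g : [set b; a] != g.
  case/orP: g_wc_cd => /eqP ->; first by apply: set2_neq.
  by rewrite setUC.
exists b; first by apply: cat_move1; rewrite 1?eadj_sym // setUC.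
apply: (@catval_gt1 _ _ w a) => //; last by rewrite eq_sym.
  by rewrite eadjD1 Ebw nbw_g.
by rewrite eadjD1 eadj_sym Eab nab_g.
Qed.

Lemma cycle_fork X x0 x1 x2 x3 s :
  uniq [:: x0, x1, x2, x3 & s] -> cycle (eadj X) [:: x0, x1, x2, x3 & s] -> fork X x2.
Proof.
rewrite /= rcons_path !inE => /and5P [/norP [n01 /norP [n02 _]]
  /norP [_ /norP [n13 n1s]] /norP [_ n2s] _ _] /and5P [E01 E12 E23 p3 Elast].
set d := head x0 s.
have [E3d ds] : eadj X x3 d /\ d \in x0 :: s.
  by case: s p3 Elast {n1s n2s} @d => [|y s] /=; [|case/andP]; rewrite !inE eqxx ?orbT.
have nd x : x != x0 -> x \notin s -> d != x.
  by move=> nx0 nxs; apply: contraTneq ds => ->; rewrite inE negb_or nx0 nxs.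
exists x0, x1, x3, d; split => //; split => //.
- by apply: nd; rewrite // eq_sym.
- by rewrite setUC; apply: set2_neq; rewrite // eq_sym nd // eq_sym.
Qed.

Lemma pendant_triangle_fork X y a b c :
  eadj X y a -> eadj X a b -> eadj X b c -> eadj X c a -> uniq [:: y; a; b; c] ->
  fork X b /\ fork X c.
Proof.
move=> Eya Eab Ebc Eca; rewrite /= !inE => /and4P [/norP [nya /norP [nyb nyc]]
  /norP [nab nac] _ _].
split; first by exists y, a, c, a; split => //; split; rewrite // set2_neq.
exists y, a, b, a; split; try by rewrite // eadj_sym.
by split; rewrite // ?set2_neq // eq_sym.
Qed.

End Game.

Section Cycles.
Variable T : finType.
Implicit Types (r s : seq T) (h : {set T}) (x y z : T).

Lemma cycle_edgesP r h :
  reflect (exists2 x, x \in r & h = [set x; next r x]) (h \in cycle_edges r).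
Proof.
apply: (iffP imset2P) => [[x y rx ry ->]|[x rx ->]].
  by exists x => //; move: ry; rewrite inE => /andP [_ /eqP ->].
by exists x (next r x) => //; rewrite inE mem_next rx eqxx.
Qed.

Lemma mem_cycle_edge r h z : h \in cycle_edges r -> z \in h -> z \in r.
Proof. by case/cycle_edgesP => x rx -> /set2P [] ->; rewrite ?mem_next. Qed.

(* Rotate the cycle so that it starts at the far end [y] of the deleted edge
   [x - y]; the remaining edges then form a path through all of [r]. *)
Lemma cycle_edgesD1_connect r h : 3 <= size r -> uniq r -> h \in cycle_edges r ->
  {in r &, forall x1 x2, connect (eadj (cycle_edges r :\ h)) x1 x2}.
Proof.
move=> r_ge3 r_uniq /cycle_edgesP [x rx ->].
set y := next r x; have ry : y \in r by rewrite mem_next.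
have [i s r_rot] := rot_to ry.
have ys_uniq : uniq (y :: s) by rewrite -r_rot rot_uniq.
have ys_size : size (y :: s) = size r by rewrite -r_rot size_rot.
have ys_mem z : (z \in y :: s) = (z \in r) by rewrite -r_rot mem_rot.
have nth_inj j k : j < size (y :: s) -> k < size (y :: s) ->
    nth y (y :: s) j = nth y (y :: s) k -> j = k.
  by move=> jlt klt /eqP; rewrite nth_uniq // => /eqP.
have next_nthS j : j < size s -> next r (nth y (y :: s) j) = nth y (y :: s) j.+1.
  have next_ys z : next r z = next (y :: s) z by rewrite -r_rot next_rot.
  move=> jlt; rewrite next_ys next_nth mem_nth; last by rewrite /= ltnS ltnW.
  by rewrite index_uniq //= ltnS ltnW.
have ys_path : path (eadj (cycle_edges r :\ [set x; y])) y s.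
  apply/(pathP y) => j jlt; rewrite eadjD1.
  have j1lt : j.+1 < size (y :: s) by rewrite /= ltnS.
  have jlt' : j < size (y :: s) by rewrite /= ltnS ltnW.
  apply/andP; split; last first.
    apply/cycle_edgesP; exists (nth y (y :: s) j); first by rewrite -ys_mem mem_nth.
    by rewrite next_nthS.
  apply/eqP => /set2_eq [[_ sj_y]|[j_y sj_x]].
    by have := nth_inj _ 0 j1lt isT sj_y.
  have j0 : j = 0 by apply: (nth_inj _ 0 jlt' isT).
  subst j; have s_gt1 : 1 < size s by move: r_ge3; rewrite -ys_size.
  have := next_nthS 1 s_gt1; rewrite /= sj_x -/y => y_eq.
  by have := nth_inj 2 0 s_gt1 isT (esym y_eq).
move=> x1 x2 rx1 rx2; rewrite -!ys_mem in rx1 rx2.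
apply: (@connect_trans _ _ y); last exact: (path_connect ys_path rx2).
rewrite (sym_connect_sym (@eadj_sym _ _)); exact: (path_connect ys_path rx1).
Qed.

Lemma triangle_cycle_edges r : size r = 3 -> uniq r ->
  cycle_edges r = [set [set x; y] | x in r, y in r & x != y].
Proof.
case: r => [|a [|b [|c [|? ?]]]] // _.
rewrite /= !inE => /and3P [/norP [nab nac] nbc _].
have na : next [:: a; b; c] a = b by rewrite /= eqxx.
have nb : next [:: a; b; c] b = c by rewrite /= eq_sym (negbTE nab) eqxx.
have nc : next [:: a; b; c] c = a
  by rewrite /= eq_sym (negbTE nac) eq_sym (negbTE nbc) eqxx.
apply/setP => h; apply/cycle_edgesP/imset2P => [[x rx ->]|[x y rx]].
  exists x (next [:: a; b; c] x) => //; rewrite inE mem_next rx.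
  by move: rx; rewrite !inE => /or3P [] /eqP ->; rewrite ?na ?nb ?nc // eq_sym.
rewrite inE => /andP [ry nxy] ->.
move: rx ry nxy; rewrite !inE => /or3P [] /eqP -> /or3P [] /eqP ->; rewrite ?eqxx // => _.
- by exists a; rewrite ?inE ?eqxx // na.
- by exists c; rewrite ?inE ?eqxx ?orbT // nc setUC.
- by exists a; rewrite ?inE ?eqxx // na setUC.
- by exists b; rewrite ?inE ?eqxx ?orbT // nb.
- by exists c; rewrite ?inE ?eqxx ?orbT // nc.
- by exists b; rewrite ?inE ?eqxx ?orbT // nb setUC.
Qed.

Lemma cycle_edges_in_triangle r s : size r = 3 -> uniq s -> 3 <= size s ->
  {subset s <= r} -> cycle_edges s = cycle_edges r.
Proof.
move=> r3 s_uniq s_ge3 sr.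
have r_le_s : size r <= size s by rewrite r3.
have [s_size s_r] := uniq_min_size s_uniq sr r_le_s.
have r_uniq : uniq r by rewrite (uniq_size_uniq s_uniq s_r) s_size.
rewrite !triangle_cycle_edges ?s_size //.
apply/setP => h; apply/imset2P/imset2P => -[x y xs ys ->];
  by exists x y; move: xs ys; rewrite ?inE ?s_r => xr yr.
Qed.

Lemma is_cycle_mem (e : rel T) r : is_cycle e r -> exists x, x \in r.
Proof. by case: r => [[]|x r] //; exists x; rewrite mem_head. Qed.

Lemma triangle_rest r x : size r = 3 -> uniq r -> x \in r ->
  exists y z, uniq [:: x; y; z] /\ r =i [:: x; y; z].
Proof.
case: r => [|a [|b [|c [|? ?]]]] // _ r_uniq.
rewrite !inE => /or3P [] /eqP ->.
- by exists b, c.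
- exists c, a; split; first by rewrite -(rot_uniq 1) in r_uniq.
  by move=> z; rewrite !inE; case: (z == a); case: (z == b); case: (z == c).
- exists a, b; split; first by rewrite -(rot_uniq 2) in r_uniq.
  by move=> z; rewrite !inE; case: (z == a); case: (z == b); case: (z == c).
Qed.

End Cycles.

Section Graph.
Variable T : finType.
Variable adj : rel T.
Hypothesis adj_sym : symmetric adj.
Hypothesis adj_irr : irreflexive adj.
Implicit Types (p q r s : seq T) (f g : {set T}) (u v w x y z : T).

Local Notation E0 := (edges adj).

Lemma mem_edges x y : ([set x; y] \in E0) = adj x y.
Proof.
rewrite inE; apply/existsP/idP => [[a /existsP [b /andP [Eab /eqP]]]|Exy].
  by case/set2_eq => -[-> ->] //; rewrite adj_sym.
by exists x; apply/existsP; exists y; rewrite Exy eqxx.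
Qed.

Lemma edges_loopless : loopless E0.
Proof. by move=> x; have := mem_edges x x; rewrite setUid adj_irr => ->. Qed.

Definition adjD f := eadj (E0 :\ f).

Lemma adjDE f x y : adjD f x y = adj x y && ([set x; y] != f).
Proof. by rewrite /adjD eadjD1 /eadj mem_edges andbC. Qed.

Lemma adjD_sym f : symmetric (adjD f).
Proof. exact: eadj_sym. Qed.

Lemma cycle_edges_sub r : cycle adj r -> {subset cycle_edges r <= E0}.
Proof. by move=> r_cyc h /cycle_edgesP [x rx ->]; rewrite mem_edges (next_cycle r_cyc). Qed.

Lemma cycle_adjD f r : uniq r -> cycle adj r -> f \notin cycle_edges r -> cycle (adjD f) r.
Proof.
move=> r_uniq r_cyc fr; apply: (cycle_from_next r_uniq) => x rx.
rewrite adjDE (next_cycle r_cyc rx); apply: contraNneq fr => <-.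
by apply/cycle_edgesP; exists x.
Qed.

Lemma connect_adjD f r : (forall x y, connect adj x y) -> is_cycle adj r ->
  f \in cycle_edges r -> forall x y, connect (adjD f) x y.
Proof.
move=> adj_connect [r_ge3 r_uniq r_cyc] fr x y.
apply: (connect_sub _ (adj_connect x y)) => a b Eab.
have [abf|] := eqVneq [set a; b] f; last by move=> nabf; rewrite connect1 // adjDE Eab.
have [ra rb] : a \in r /\ b \in r by split; apply: (mem_cycle_edge fr); rewrite -abf ?set21 ?set22.
apply: (connect_sub _ (cycle_edgesD1_connect r_ge3 r_uniq fr ra rb)) => u w.
rewrite eadjD1 /eadj => /andP [nuwf uwr]; apply: connect1.
by rewrite adjDE nuwf -mem_edges (cycle_edges_sub r_cyc).
Qed.

Lemma triangle_adj r x y : size r = 3 -> uniq r -> cycle adj r ->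
  x \in r -> y \in r -> x != y -> adj x y.
Proof.
move=> r3 r_uniq r_cyc rx ry nxy; rewrite -mem_edges (cycle_edges_sub r_cyc) //.
by rewrite triangle_cycle_edges //; apply/imset2P; exists x y; rewrite // inE ry.
Qed.

Lemma connected_deg p v : (forall x y, connect adj x y) -> is_cycle adj p -> deg E0 v != 0.
Proof.
move=> adj_connect [p_ge3 p_uniq _].
have [w nwv] : exists w, w != v.
  case: p p_ge3 p_uniq => [|x [|y ?]] //= _; rewrite inE negb_or => /andP [/andP [nxy _] _].
  by case: (eqVneq x v) => [<-|]; [exists y; rewrite eq_sym | exists x].
case/connectP: (adj_connect v w) => [[|z s]] /=; first by move=> _ wv; rewrite wv eqxx in nwv.
by case/andP => Evz _ _; apply: (@eadj_deg _ _ _ z); rewrite /eadj mem_edges.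
Qed.

Definition fork_free f v := forall w, w != v -> connect (adjD f) v w -> ~ fork (E0 :\ f) w.

Lemma cat_fork_free v : cat_at adj v <= 3 -> deg E0 v != 0 -> exists f, fork_free f v.
Proof.
move=> cat_le3 dv; have [f _ herder_wins] := herder_strategy dv cat_le3.
exists f => w nwv vw /(fork_catval (looplessD1 f edges_loopless)).
by rewrite ltnNge herder_wins // /cat_move vw nwv.
Qed.

Section ForkFree.
Variables (f : {set T}) (v : T).
Hypothesis v_fork_free : fork_free f v.

Local Notation comp := (connect (adjD f) v).

Lemma fork_free_cycle_size r : uniq r -> cycle (adjD f) r -> {subset r <= comp} ->
  size r < 4.
Proof.
case: r => [|x0 [|x1 [|x2 [|x3 s]]]] // r_uniq r_cyc r_comp; exfalso.
have [y [s' ys]] : exists y s', rcons s x0 = y :: s'.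
  by case: s {r_uniq r_cyc r_comp} => [|y s]; do 2 eexists.
have fork2 : fork (E0 :\ f) x2 := cycle_fork r_uniq r_cyc.
have fork3 : fork (E0 :\ f) x3.
  have r_rot : [:: x1, x2, x3, y & s'] = rot 1 [:: x0, x1, x2, x3 & s].
    by rewrite rot1_cons /= ys.
  by apply: (@cycle_fork _ _ x1 x2 x3 y s'); rewrite r_rot ?rot_uniq ?rot_cycle.
have n23 : x2 != x3 by move: r_uniq; rewrite /= !inE => /and5P [_ _ /norP []].
have [comp2 comp3] : comp x2 /\ comp x3 by split; apply: r_comp; rewrite !inE eqxx ?orbT.
case: (eqVneq x2 v) => [x2v|nx2v]; last exact: v_fork_free nx2v comp2 fork2.
by apply: v_fork_free fork3; rewrite // -x2v eq_sym.
Qed.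

Lemma fork_free_triangle a b c y : adjD f a b -> adjD f b c -> adjD f c a ->
  uniq [:: a; b; c] -> comp b -> comp c -> adjD f a y -> y \in [:: a; b; c].
Proof.
move=> Eab Ebc Eca abc_uniq vb vc Eay; apply/negPn/negP => y_out.
have yabc_uniq : uniq [:: y; a; b; c] by rewrite /= y_out.
have Eya : adjD f y a by rewrite adjD_sym.
have [fork_b fork_c] := pendant_triangle_fork Eya Eab Ebc Eca yabc_uniq.
case: (eqVneq b v) => [bv|nbv]; last exact: v_fork_free nbv vb fork_b.
apply: v_fork_free fork_c => //; rewrite -bv eq_sym.
by move: abc_uniq; rewrite /= !inE => /and3P [].
Qed.

Lemma fork_free_cycle r : 3 <= size r -> uniq r -> cycle (adjD f) r ->
  (exists2 x, x \in r & comp x) -> size r = 3 /\ {subset comp <= r}.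
Proof.
move=> r_ge3 r_uniq r_cyc [x rx vx].
have r_comp : {subset r <= comp}.
  by move=> z rz; apply: connect_trans vx (connect_cycle r_cyc rx rz).
have r3 : size r = 3.
  by apply/eqP; rewrite eqn_leq r_ge3 andbT -ltnS fork_free_cycle_size.
split => // y vy; apply/negPn/negP => y_out.
have xy : connect (adjD f) x y.
  by apply: connect_trans vy; rewrite (sym_connect_sym (@adjD_sym f)).
have [a [b [ra b_out Eab]]] : exists a b, [/\ a \in r, b \notin r & adjD f a b].
  exact: connect_exit xy rx y_out.
have [i s r_rot] := rot_to ra.
have := r3; rewrite -(size_rot i) r_rot; case: s r_rot => [|b' [|c' [|? ?]]] // r_rot _.
have rot_cyc : cycle (adjD f) [:: a; b'; c'] by rewrite -r_rot rot_cycle.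
have rot_mem z : (z \in [:: a; b'; c']) = (z \in r) by rewrite -r_rot mem_rot.
move: rot_cyc => /and4P [Eab' Eb'c' Ec'a _].
move/negP: b_out; apply; rewrite -rot_mem.
apply: (fork_free_triangle Eab' Eb'c' Ec'a) Eab; first by rewrite -r_rot rot_uniq.
  by apply: r_comp; rewrite -rot_mem !inE eqxx orbT.
by apply: r_comp; rewrite -rot_mem !inE eqxx !orbT.
Qed.

End ForkFree.

(* Going around [p] between the ends of [g], and around [q] to bypass [f],
   closes a cycle avoiding [f]. *)
Lemma theta_cycle f g p q : is_cycle adj p -> is_cycle adj q ->
  f \in cycle_edges p -> f \in cycle_edges q ->
  g \in cycle_edges p -> g \notin cycle_edges q -> exists r, is_cycle (adjD f) r.
Proof.
move=> [p_ge3 p_uniq p_cyc] [q_ge3 q_uniq q_cyc] fp fq gp gq.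
have ngf : g != f by apply: contraNneq gq => ->.
case/cycle_edgesP: (gp) => c pc g_cd.
set d := next p c in g_cd.
have pd : d \in p by rewrite mem_next.
have Ecd : adj c d := next_cycle p_cyc pc.
have ncd : c != d by apply: contraTneq Ecd => ->; rewrite adj_irr.
pose adjD2 := eadj (E0 :\ f :\ g).
have adjD2E u w : [set u; w] \in E0 -> [set u; w] != f -> [set u; w] != g -> adjD2 u w.
  by move=> uwE nf ng; rewrite /adjD2 !eadjD1 ng nf /eadj uwE.
have cd : connect adjD2 c d.
  apply: (connect_sub _ (cycle_edgesD1_connect p_ge3 p_uniq gp pc pd)) => a b.
  rewrite eadjD1 => /andP [abg abp].
  have [abf|abf] := eqVneq [set a; b] f; last first.
    by apply: connect1; apply: adjD2E => //; apply: (cycle_edges_sub p_cyc).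
  have [qa qb] : a \in q /\ b \in q.
    by split; apply: (mem_cycle_edge fq); rewrite -abf ?set21 ?set22.
  apply: (connect_sub _ (cycle_edgesD1_connect q_ge3 q_uniq fq qa qb)) => u w.
  rewrite eadjD1 => /andP [uwf uwq]; apply: connect1; apply: adjD2E => //.
    exact: (cycle_edges_sub q_cyc).
  by apply: contraNneq gq => <-.
case/connectP: cd => s cs; case: (shortenP cs) => s' cs' s'_uniq _ ds'.
exists (c :: s'); split => //.
  case: s' cs' s'_uniq ds' => [|z [|z' s'']] //=; first by move=> _ _ dc; rewrite dc eqxx in ncd.
  by move=> /andP [Ecz _] _ zd; move: Ecz; rewrite -zd /adjD2 eadjD1 -g_cd eqxx.
rewrite /= rcons_path; apply/andP; split.
  by apply: sub_path cs' => u w; rewrite /adjD2 eadjD1 => /andP [].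
by rewrite -ds' adjDE adj_sym Ecd setUC -g_cd ngf.
Qed.

Definition pendant_triangle p a b :=
  [/\ size p = 3, a \in p, b \notin p, adj a b &
      forall x y, x \in p -> y \notin p -> adj x y -> [set x; y] = [set a; b]].

Lemma pendant_exit_eq p a b x1 y1 x2 y2 : pendant_triangle p a b ->
  x1 \in p -> y1 \notin p -> adj x1 y1 -> x2 \in p -> y2 \notin p -> adj x2 y2 ->
  x1 = x2 /\ y1 = y2.
Proof.
case=> _ _ _ _ exit_ab px1 y1p E1 px2 y2p E2.
move: (exit_ab _ _ px1 y1p E1); rewrite -(exit_ab _ _ px2 y2p E2).
by case/set2_eq => // -[_ y1x2]; move: y1p; rewrite y1x2 px2.
Qed.

Lemma pendant_triangle_exit p a b x y : pendant_triangle p a b ->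
  x \in p -> y \notin p -> adj x y -> pendant_triangle p x y.
Proof.
move=> pend px py Exy; have [p3 _ _ _ exit_ab] := pend.
split=> // x' y' px' py' Ex'y'.
by have [-> ->] := pendant_exit_eq pend px' py' Ex'y' px py Exy.
Qed.

Lemma pendant_triangle_disjoint p a b q : pendant_triangle p a b -> is_cycle adj q ->
  size q = 3 -> cycle_edges p != cycle_edges q -> forall z, z \in p -> z \notin q.
Proof.
move=> pend [q_ge3 q_uniq q_cyc] q3 pq z pz; apply/negP => qz.
have [y1 [y2 [zy_uniq q_eq]]] := triangle_rest q3 q_uniq qz.
have [nzy1 nzy2 ny12] : [/\ z != y1, z != y2 & y1 != y2].
  by move: zy_uniq; rewrite /= !inE => /and3P [/norP [-> ->] ->].
have Eq x y : x \in [:: z; y1; y2] -> y \in [:: z; y1; y2] -> x != y -> adj x y.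
  by rewrite -!q_eq; apply: triangle_adj.
have q_mem : [/\ z \in [:: z; y1; y2], y1 \in [:: z; y1; y2] & y2 \in [:: z; y1; y2]].
  by rewrite !inE !eqxx !orbT.
case: q_mem => qz' qy1 qy2.
have [py1|y1p] := boolP (y1 \in p); have [py2|y2p] := boolP (y2 \in p).
- move/eqP: pq; apply; symmetry; apply: cycle_edges_in_triangle => //; first by case: pend.
  by move=> x; rewrite q_eq !inE => /or3P [] /eqP ->.
- have [zy1 _] := pendant_exit_eq pend pz y2p (Eq _ _ qz' qy2 nzy2) py1 y2p (Eq _ _ qy1 qy2 ny12).
  by rewrite zy1 eqxx in nzy1.
- have ny21 : y2 != y1 by rewrite eq_sym.
  have [zy2 _] := pendant_exit_eq pend pz y1p (Eq _ _ qz' qy1 nzy1) py2 y1p (Eq _ _ qy2 qy1 ny21).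
  by rewrite zy2 eqxx in nzy2.
- have [_ y12] := pendant_exit_eq pend pz y1p (Eq _ _ qz' qy1 nzy1) pz y2p (Eq _ _ qz' qy2 nzy2).
  by rewrite y12 eqxx in ny12.
Qed.

Lemma cycles_in_triangle p q r : is_cycle adj p -> is_cycle adj q -> size r = 3 ->
  {subset p <= r} -> {subset q <= r} -> cycle_edges p = cycle_edges q.
Proof.
move=> [p_ge3 p_uniq _] [q_ge3 q_uniq _] r3 pr qr.
by rewrite (cycle_edges_in_triangle r3 p_uniq p_ge3 pr) (cycle_edges_in_triangle r3 q_uniq q_ge3 qr).
Qed.

Section Cat3.
Hypothesis adj_connect : forall x y, connect adj x y.
Hypothesis herder_wins : forall v, exists f, fork_free f v.

(* Deleting an edge of [p] keeps [G] connected, so by [fork_free_cycle] every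
   cycle of [G - f] would be a triangle through all vertices, holding both
   [p] and [q]; yet [G - f] has a cycle: [q], or a theta detour. *)
Lemma fork_free_off_cycle p q f v : is_cycle adj p -> is_cycle adj q ->
  cycle_edges p != cycle_edges q -> fork_free f v -> f \notin cycle_edges p.
Proof.
move=> cp cq pq v_ff; apply/negP => fp.
have conn := connect_adjD adj_connect cp fp.
have no_cycle r : ~ is_cycle (adjD f) r.
  move=> cr; have [y ry] := is_cycle_mem cr; case: cr => r_ge3 r_uniq r_cyc.
  have [r3 r_all] := fork_free_cycle v_ff r_ge3 r_uniq r_cyc (ex_intro2 _ _ y ry (conn v y)).
  by move/eqP: pq; apply; apply: (cycles_in_triangle cp cq r3) => z _; apply/r_all/conn.
have [fq|fq] := boolP (f \in cycle_edges q); last first.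
  by case: cq => q_ge3 q_uniq q_cyc; apply: (no_cycle q); split=> //; apply: cycle_adjD.
have [g] : exists g, (g \in cycle_edges p) && (g \notin cycle_edges q) ||
                     (g \in cycle_edges q) && (g \notin cycle_edges p).
  by move: pq; rewrite eqEsubset negb_and => /orP [] /subsetPn [g g1 g2];
    exists g; rewrite g1 g2 ?orbT.
case/orP => /andP [g1 g2];
  [have [r] := theta_cycle cp cq fp fq g1 g2 | have [r] := theta_cycle cq cp fq fp g1 g2];
  exact: no_cycle.
Qed.

Lemma cycle_pendant p q : is_cycle adj p -> is_cycle adj q ->
  cycle_edges p != cycle_edges q -> exists a b, pendant_triangle p a b.
Proof.
move=> cp cq pq; have [x0 px0] := is_cycle_mem cp; have [p_ge3 p_uniq p_cyc] := cp.
have [f x0_ff] := herder_wins x0.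
have p_cycD := cycle_adjD p_uniq p_cyc (fork_free_off_cycle cp cq pq x0_ff).
have [p3 comp_p] := fork_free_cycle x0_ff p_ge3 p_uniq p_cycD (ex_intro2 _ _ x0 px0 (connect0 _ _)).
have [y py] : exists y, y \notin p.
  case: (pickP [predC p]) => [y py | p_all]; first by exists y.
  by case/eqP: pq; apply: (cycles_in_triangle cp cq p3) => // z _; apply/negbFE/p_all.
have [a [b [pa pb Eab]]] : exists a b, [/\ a \in p, b \notin p & adj a b].
  exact: connect_exit (adj_connect x0 y) px0 py.
have exit_f x z : x \in p -> z \notin p -> adj x z -> [set x; z] = f.
  move=> px pz Exz; apply: contraNeq pz => nf; apply: comp_p.
  by apply: connect_trans (connect_cycle p_cycD px0 px) (connect1 _); rewrite adjDE Exz.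
by exists a, b; split => // x z px pz Exz; rewrite (exit_f a b) // exit_f.
Qed.

(* Everything reachable from [b] in [G - ab], together with [p], is closed
   under adjacency in [G]. *)
Lemma pendant_cut_connect p a b z : pendant_triangle p a b -> z \notin p ->
  connect (adjD [set a; b]) b z.
Proof.
move=> [_ pa _ _ exit_ab] zp; apply/negPn/negP => b_z.
pose A := [pred y | connect (adjD [set a; b]) b y || (y \in p)].
have Ab : A b by rewrite /A /= connect0.
have Az : ~~ A z by rewrite /A /= negb_or b_z.
have [u [w [Au Aw Euw]]] := connect_exit (adj_connect b z) Ab Az.
move: Aw; rewrite /A /= negb_or => /andP [bw wp].
have nwa : w != a by apply: contraNneq wp => ->.
have nwb : w != b by apply: contraNneq bw => ->; apply: connect0.
case/orP: Au => [bu|pu].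
  move/negP: bw; apply; apply: connect_trans bu (connect1 _).
  by rewrite adjDE Euw setUC set2_neq.
have := set2_neq u nwa nwb.
by rewrite [[set w; u]]setUC (exit_ab u w pu wp Euw) eqxx.
Qed.

(* Otherwise the herder's fork-free move for [b] leaves a cycle ([p] or [q])
   in the component of [b] that misses [b]. *)
Lemma pendant_attachment p a b q : pendant_triangle p a b -> is_cycle adj p ->
  is_cycle adj q -> cycle_edges p != cycle_edges q ->
  (forall z, z \in p -> z \notin q) -> b \in q.
Proof.
move=> pend cp cq pq pq_disj; have [_ pa pb Eab _] := pend.
have [p_ge3 p_uniq p_cyc] := cp; have [x0 qx0] := is_cycle_mem cq.
have [q_ge3 q_uniq q_cyc] := cq.
have [f b_ff] := herder_wins b.
have cycle_hits_b r : is_cycle (adjD f) r -> (exists2 x, x \in r & connect (adjD f) b x) -> b \in r.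
  by case=> r_ge3 r_uniq r_cyc /(fork_free_cycle b_ff r_ge3 r_uniq r_cyc) [_]; apply; apply: connect0.
have [f_ab|nf_ab] := eqVneq f [set a; b]; last first.
  have fp := fork_free_off_cycle cp cq pq b_ff.
  case/negP: pb; apply: cycle_hits_b; first by split=> //; apply: cycle_adjD.
  by exists a => //; apply: connect1; rewrite adjDE adj_sym Eab setUC eq_sym nf_ab.
have fq : f \notin cycle_edges q.
  by apply: contra (pq_disj a pa) => /mem_cycle_edge; apply; rewrite f_ab set21.
apply: cycle_hits_b; first by split=> //; apply: cycle_adjD.
exists x0 => //; rewrite f_ab; apply: (pendant_cut_connect pend).
by apply: contraTN qx0; apply: pq_disj.
Qed.

Section PendantPair.
Variables (p q : seq T) (a b : T).
Hypotheses (cp : is_cycle adj p) (cq : is_cycle adj q).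
Hypotheses (pend_p : pendant_triangle p a b) (pend_q : pendant_triangle q b a).
Hypothesis pq_disj : forall z, z \in p -> z \notin q.

Lemma pendant_pair_cover y : (y \in p) || (y \in q).
Proof.
have [_ pa _ _ exit_p] := pend_p; have [_ qb _ _ exit_q] := pend_q.
apply/negPn/negP => y_out.
have [u [w [Au Aw Euw]]] : exists u w,
    [/\ (u \in p) || (u \in q), ~~ ((w \in p) || (w \in q)) & adj u w].
  by apply: connect_exit (adj_connect a y) _ y_out; rewrite pa.
have w_ab : w \notin [set a; b].
  by rewrite !inE; apply: contra Aw => /orP [] /eqP ->; rewrite ?pa ?qb ?orbT.
move: Aw; rewrite negb_or => /andP [wp wq]; move/negP: w_ab; apply.
case/orP: Au => [pu|qu]; first by rewrite -(exit_p u w pu wp Euw) set22.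
by rewrite setUC -(exit_q u w qu wq Euw) set22.
Qed.

Variables a2 a3 b2 b3 : T.
Hypotheses (a_uniq : uniq [:: a; a2; a3]) (b_uniq : uniq [:: b; b2; b3]).
Hypotheses (p_eq : p =i [:: a; a2; a3]) (q_eq : q =i [:: b; b2; b3]).

Lemma pendant_pair_uniq : uniq [:: a; a2; a3; b; b2; b3].
Proof.
rewrite -[[:: a; _; _; _; _; _]]/([:: a; a2; a3] ++ [:: b; b2; b3]) cat_uniq a_uniq b_uniq.
by rewrite andbT; apply/hasPn => y; rewrite -q_eq -p_eq => qy; apply: contraTN qy; apply: pq_disj.
Qed.

Lemma pendant_pair_card : #|T| = 6.
Proof.
have card6 : #|[:: a; a2; a3; b; b2; b3]| = 6 by apply/card_uniqP/pendant_pair_uniq.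
rewrite -card6; apply: eq_card => x.
by have := pendant_pair_cover x; rewrite p_eq q_eq !inE => /orP [] /or3P [] /eqP ->;
  rewrite !eqxx ?orbT.
Qed.

Lemma pendant_pair_edges :
  edges adj = [set [set a; a2]; [set a2; a3]; [set a; a3];
                   [set b; b2]; [set b2; b3]; [set b; b3]; [set a; b]].
Proof.
have [p3 _ _ Eab exit_p] := pend_p; have [q3 _ _ _ exit_q] := pend_q.
have [[_ p_uniq p_cyc] [_ q_uniq q_cyc]] := (cp, cq).
have Ep x y : x \in [:: a; a2; a3] -> y \in [:: a; a2; a3] -> x != y -> adj x y.
  by rewrite -!p_eq; apply: triangle_adj.
have Eq x y : x \in [:: b; b2; b3] -> y \in [:: b; b2; b3] -> x != y -> adj x y.
  by rewrite -!q_eq; apply: triangle_adj.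
apply/eqP; rewrite eqEsubset; apply/andP; split; last first.
  move: a_uniq b_uniq; rewrite /= !inE => /and3P [/norP [na12 na13] na23 _].
  move=> /and3P [/norP [nb12 nb13] nb23 _].
  have in3 x y z : [/\ x \in [:: x; y; z], y \in [:: x; y; z] & z \in [:: x; y; z]].
    by rewrite !inE !eqxx ?orbT.
  have [pa1 pa2 pa3] := in3 a a2 a3; have [qb1 qb2 qb3] := in3 b b2 b3.
  rewrite !subUset !sub1set !mem_edges Eab andbT.
  by rewrite (Ep a a2) // (Ep a2 a3) // (Ep a a3) // (Eq b b2) // (Eq b2 b3) // (Eq b b3).
apply/subsetP => e; rewrite inE => /existsP [x /existsP [y /andP [Exy /eqP ->]]].
have nxy : x != y by apply: contraTneq Exy => ->; rewrite adj_irr.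
have [px|qx] := orP (pendant_pair_cover x); have [py|qy] := orP (pendant_pair_cover y).
- move: px py nxy; rewrite !p_eq !inE => /or3P [] /eqP -> /or3P [] /eqP ->; rewrite ?eqxx // => _;
    by rewrite ?inE ?eqxx ?orbT // setUC ?eqxx ?orbT.
- have yp : y \notin p by apply: contraTN qy; apply: pq_disj.
  by rewrite (exit_p x y px yp Exy) !inE eqxx ?orbT.
- have yq : y \notin q by apply: pq_disj.
  by rewrite (exit_q x y qx yq Exy) setUC !inE eqxx ?orbT.
- move: qx qy nxy; rewrite !q_eq !inE => /or3P [] /eqP -> /or3P [] /eqP ->; rewrite ?eqxx // => _;
    by rewrite ?inE ?eqxx ?orbT // setUC ?eqxx ?orbT.
Qed.

End PendantPair.

Lemma pendant_pair_shape p q a b : is_cycle adj p -> is_cycle adj q ->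
  pendant_triangle p a b -> pendant_triangle q b a -> (forall z, z \in p -> z \notin q) ->
  #|T| = 6 /\
  exists a1 a2 a3 b1 b2 b3 : T,
    uniq [:: a1; a2; a3; b1; b2; b3] /\
    edges adj = [set [set a1; a2]; [set a2; a3]; [set a1; a3];
                     [set b1; b2]; [set b2; b3]; [set b1; b3]; [set a1; b1]].
Proof.
move=> cp cq pend_p pend_q pq_disj.
have [[_ p_uniq _] [_ q_uniq _]] := (cp, cq).
have [[p3 pa _ _ _] [q3 qb _ _ _]] := (pend_p, pend_q).
have [a2 [a3 [a_uniq p_eq]]] := triangle_rest p3 p_uniq pa.
have [b2 [b3 [b_uniq q_eq]]] := triangle_rest q3 q_uniq qb.
split; first exact: (pendant_pair_card pend_p pend_q pq_disj a_uniq b_uniq p_eq q_eq).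
exists a, a2, a3, b, b2, b3; split; first exact: (pendant_pair_uniq pq_disj a_uniq b_uniq p_eq q_eq).
exact: (pendant_pair_edges cp cq pend_p pend_q pq_disj a_uniq b_uniq p_eq q_eq).
Qed.

End Cat3.

End Graph.

Theorem mainTheorem7 (T : finType) (adj : rel T) :
  simple_graph adj -> connected_graph adj -> two_distinct_cycles adj ->
  cat_number adj = 3 ->
  #|T| = 6 /\
  exists a1 a2 a3 b1 b2 b3 : T,
    uniq [:: a1; a2; a3; b1; b2; b3] /\
    edges adj = [set [set a1; a2]; [set a2; a3]; [set a1; a3];
                     [set b1; b2]; [set b2; b3]; [set b1; b3];
                     [set a1; b1]].
Proof.
move=> [adj_sym adj_irr] [_ adj_connect] [p [q [cp cq pq]]] cat3.
have herder_wins v : exists f, fork_free adj f v.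
  apply: cat_fork_free => //; first by rewrite -cat3; apply: leq_bigmax.
  exact: connected_deg adj_connect cp.
have [a [b pend_p]] := cycle_pendant adj_sym adj_irr adj_connect herder_wins cp cq pq.
have qp : cycle_edges q != cycle_edges p by rewrite eq_sym.
have [c [d pend_q]] := cycle_pendant adj_sym adj_irr adj_connect herder_wins cq cp qp.
have [_ pa _ Eab _] := pend_p; have [q3 _ _ _ _] := pend_q.
have pq_disj := pendant_triangle_disjoint adj_sym pend_p cq q3 pq.
have qb := pendant_attachment adj_sym adj_irr adj_connect herder_wins pend_p cp cq pq pq_disj.
have pend_qba : pendant_triangle adj q b a.
  by apply: pendant_triangle_exit pend_q qb (pq_disj a pa) _; rewrite adj_sym.
exact: (pendant_pair_shape adj_sym adj_irr adj_connect cp cq pend_p pend_qba pq_disj).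
Qed.
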